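(* There exists a constant $c_0$, depending only on $s$ and $d$, such that the following holds whenever $c_{db}\ge c_0$. Let $Q_0,Q_1,\dots,Q_n\in\mathcal D$ be cubes such that $Q_j$ is a child of $Q_{j-1}$ for $1\le j\le n$, and suppose that $Q_j$ is not $p$-doubling (with constant $c_{db}$) for $1\le j\le n$. Then $$\Theta(Q_j)\le 2^{-j/2}\,p(Q_0)\qquad\text{for }0\le j\le n.$$
   Context: $0<s<d$. $E\subset\mathbb R^d$ is a Cantor set built from a compact $Q^0$ by repeatedly choosing, inside each closed ''cube'' $Q$ of generation $k$, a finite nonempty family of closed children (the cubes of generation $k+1$), such that each child $Q'$ of $Q$ satisfies $\frac18\ell(Q)\le\ell(Q')\le\frac13\ell(Q)$, where $\ell(Q)=\operatorname{diam}(Q)$, and distinct children of $Q$ are at distance $\ge c_{sep}\ell(Q)$. $\mathcal D$ is the family of all such cubes. $\mu$ is a finite Borel measure supported on $E$ with $\mu(Q)>0$ for all $Q\in\mathcal D$. $\Theta(Q)=\mu(Q)/\ell(Q)^s$, $p(Q)=\sum_{P\in\mathcal D,\,P\supset Q}\frac{\ell(Q)}{\ell(P)}\Theta(P)$, and $Q$ is $p$-doubling with constant $c_{db}$ if $p(Q)\le c_{db}\Theta(Q)$. *)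

From HB Require Import structures.
From mathcomp Require Import all_boot all_order all_algebra.
From mathcomp Require Import all_classical all_reals all_analysis.
Set Implicit Arguments. Unset Strict Implicit. Unset Printing Implicit Defensive.
Import Order.TTheory GRing.Theory Num.Theory.
Import numFieldNormedType.Exports.
Local Open Scope classical_set_scope.
Local Open Scope ring_scope.

Section CantorDefs.
Variables (R : realType) (d : nat).

(* Points of R^d are row vectors; topology of 'rV[R]_d is the product
   (= Euclidean) topology. *)
Local Notation V := 'rV[R]_d.

Definition edist (x y : V) : R :=
  Num.sqrt (\sum_(i < d) (x ord0 i - y ord0 i) ^+ 2).

Definition diam (A : set V) : R :=
  sup [set r | exists x y, A x /\ A y /\ r = edist x y].

Definition setdist (A B : set V) : R :=
  inf [set r | exists x y, A x /\ B y /\ r = edist x y].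

Definition Rd_borel := g_sigma_algebraType (@open V).

(* The tree of cubes: a node is a word w : seq nat (the child of w with
   label i is i :: w); nch w is the number of children of node w,
   cube w is the cube attached to w. *)
Fixpoint valid (nch : seq nat -> nat) (w : seq nat) : bool :=
  match w with
  | [::] => true
  | i :: w' => (i < nch w')%N && valid nch w'
  end.

Definition cantor_construction (csep : R) (nch : seq nat -> nat)
    (cube : seq nat -> set V) : Prop :=
  forall w, valid nch w ->
    [/\ compact (cube w),
        (0 < nch w)%N,
        (forall i, (i < nch w)%N ->
           cube (i :: w) `<=` cube w /\
           diam (cube w) / 8 <= diam (cube (i :: w)) <= diam (cube w) / 3)
      & (forall i j, (i < nch w)%N -> (j < nch w)%N -> i <> j ->
           csep * diam (cube w) <= setdist (cube (i :: w)) (cube (j :: w)))].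

Definition cubes (nch : seq nat -> nat) (cube : seq nat -> set V) : set (set V) :=
  [set A | exists w, valid nch w /\ A = cube w].

Definition is_child (nch : seq nat -> nat) (cube : seq nat -> set V)
    (Q' Q : set V) : Prop :=
  exists w i, [/\ valid nch w, (i < nch w)%N, Q = cube w & Q' = cube (i :: w)].

Definition cantor_set (nch : seq nat -> nat) (cube : seq nat -> set V) : set V :=
  \bigcap_(k in [set: nat])
     [set x | exists w, [/\ valid nch w, size w = k & cube w x]].

Definition Theta (s : R) (mu : set Rd_borel -> \bar R) (Q : set V) : R :=
  fine (mu Q) / (diam Q `^ s).

Definition pcoef (s : R) (mu : set Rd_borel -> \bar R)
    (nch : seq nat -> nat) (cube : seq nat -> set V) (Q : set V) : \bar R :=
  (\esum_(P in [set P | cubes nch cube P /\ Q `<=` P])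
     ((diam Q / diam P) * Theta s mu P)%:E)%E.

Definition p_doubling (s cdb : R) (mu : set Rd_borel -> \bar R)
    (nch : seq nat -> nat) (cube : seq nat -> set V) (Q : set V) : Prop :=
  (pcoef s mu nch cube Q <= (cdb * Theta s mu Q)%:E)%E.

End CantorDefs.

From Pilot Require Import Defs.
From HB Require Import structures.
From mathcomp Require Import all_boot all_order all_algebra.
From mathcomp Require Import all_classical all_reals all_analysis.
From mathcomp Require Import lra.
Import Order.TTheory GRing.Theory Num.Theory.
Import numFieldNormedType.Exports.
Local Open Scope classical_set_scope.
Local Open Scope ring_scope.

(* Separation of siblings forces the ancestors of a child Q of Q' to be Q
   itself and the ancestors of Q'; since l(Q) <= l(Q')/3 this gives
   p(Q) <= Theta(Q) + p(Q')/3.  If Q is not p-doubling with c_db >= 3 then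
   Theta(Q) < p(Q)/3, hence p(Q) <= p(Q')/2.  Iterating along the chain,
   Theta(Q_j) <= p(Q_j) <= 2^-j p(Q_0), so c_0 = 3 works. *)

Lemma esumZl_le (R : realType) (T : choiceType) (S : set T) (r : R)
    (f : T -> \bar R) :
  0 <= r -> (forall x, 0 <= f x)%E ->
  (\esum_(i in S) (r%:E * f i) <= r%:E * \esum_(i in S) f i)%E.
Proof.
move=> r0 f0; apply: ge_ereal_sup => _ [X XS <-].
rewrite -ge0_mule_fsumr//; apply: lee_wpmul2l; first by rewrite lee_fin.
by apply: ereal_sup_ubound; exists X.
Qed.

Lemma esum_le_setU (R : realType) (T : choiceType) (A B C : set T)
    (a b c : T -> \bar R) :
  A `<=` B `|` C ->
  (forall i, B i -> 0 <= b i)%E -> (forall i, C i -> 0 <= c i)%E ->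
  (forall i, A i -> B i -> a i <= b i)%E ->
  (forall i, A i -> C i -> a i <= c i)%E ->
  (\esum_(i in A) a i <= \esum_(i in B) b i + \esum_(i in C) c i)%E.
Proof.
move=> ABC b0 c0 ab ac.
have b0' i : (0 <= if i \in B then b i else 0)%E.
  by case: ifPn => // /set_mem /b0.
have c0' i : (0 <= if i \in C then c i else 0)%E.
  by case: ifPn => // /set_mem /c0.
rewrite esum_mkcond (esum_mkcond B) (esum_mkcond C) -esumD //.
apply: le_esum => i _; case: ifPn => [/set_mem Ai|_]; last exact: adde_ge0.
have [Bi|Ci] := ABC i Ai.
- by rewrite (mem_set Bi) -[a i]adde0 leeD // ab.
- by rewrite (mem_set Ci) -[a i]add0e leeD // ac.
Qed.

Lemma expr_halfV_le_powR (R : realType) (j : nat) :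
  (2^-1) ^+ j <= 2 `^ (- (j%:R / 2)) :> R.
Proof.
rewrite exprVn -powR_mulrn // -powRN; apply: ler_powR; first lra.
have : 0 <= j%:R :> R by [].
lra.
Qed.

Section CantorCubes.
Context {R : realType} {d : nat}.
Local Notation V := 'rV[R]_d.

Lemma diam_ge0 (A : set V) : 0 <= diam A.
Proof.
rewrite /diam; set S := [set r | _].
have [supS|/sup_out -> //] := pselect (has_sup S).
have [[_ [x [y [Ax [Ay _]]]]] _] := supS.
apply: (@le_trans _ _ (Defs.edist x y)); first exact: sqrtr_ge0.
by apply: sup_upper_bound => //; exists x, y.
Qed.

Lemma setdist_le0 (A B : set V) z : A z -> B z -> setdist A B <= 0.
Proof.
move=> Az Bz; rewrite /setdist; set S := [set r | _].
have S0 : S 0.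
  exists z, z; rewrite /Defs.edist big1 ?sqrtr0 // => i _.
  by rewrite subrr expr0n.
apply: (ge_inf _ S0); exists 0 => r [x [y [_ [_ ->]]]]; exact: sqrtr_ge0.
Qed.

Context {csep : R} {nch : seq nat -> nat} {cube : seq nat -> set V}.
Hypothesis cc : cantor_construction csep nch cube.
Hypothesis csep_gt0 : 0 < csep.

Lemma valid_catr v u : valid nch (v ++ u) -> valid nch u.
Proof. by elim: v => [|a v IH] //= /andP[_ /IH]. Qed.

Lemma is_child_cubes Q' Q : is_child nch cube Q' Q -> cubes nch cube Q'.
Proof. by move=> [w [i [vw iw _ ->]]]; exists (i :: w); rewrite /= iw vw. Qed.

Lemma cube_catr_sub v u : valid nch (v ++ u) -> cube (v ++ u) `<=` cube u.
Proof.
elim: v => [|a v IH] /= => [_ //|/andP[av vu]].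
have [_ _ /(_ a av) [sub _] _] := cc _ vu.
exact: subset_trans sub (IH vu).
Qed.

Lemma diam_cube_catr v u :
  valid nch (v ++ u) -> diam (cube (v ++ u)) <= diam (cube u).
Proof.
elim: v => [|a v IH] /= => [_ //|/andP[av vu]].
have [_ _ /(_ a av) [_ /andP[_ h]] _] := cc _ vu.
have := IH vu; have := diam_ge0 (cube (v ++ u)); lra.
Qed.

(* A proper ancestor (suffix) of w has the same cube as w only if that cube
   has diameter 0, since children shrink diameters by a factor 3. *)
Lemma sub_cube_suffix w y : valid nch w -> valid nch y ->
  cube y `<=` cube w -> 0 < diam (cube y) -> cube y !=set0 ->
  exists v, y = v ++ w.
Proof.
elim: w => [|a u IH] /=; first by move=> *; exists y; rewrite cats0.
move=> /andP[au vu] vy sub dy_gt0 [z yz].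
have [_ _ children sep] := cc _ vu; have [subau /andP[_ dau]] := children a au.
have [v yvu] := IH vu vy (subset_trans sub subau) dy_gt0 (ex_intro _ z yz).
case/lastP: v yvu => [|v b] yvu.
  rewrite /= in yvu; subst y.
  have cube_eq : cube (a :: u) = cube u by apply/seteqP; split.
  by exfalso; move: dau dy_gt0; rewrite cube_eq; lra.
have dyu := diam_cube_catr (rcons v b) u; rewrite -yvu in dyu.
rewrite cat_rcons in yvu.
have vbu : valid nch (b :: u) by apply: (@valid_catr v); rewrite -yvu.
have bu : (b < nch u)%N by case/andP: vbu.
have [eba | nba] := eqVneq b a; first by exists v; rewrite yvu eba.
have zb : cube (b :: u) z by apply: (@cube_catr_sub v); rewrite -yvu.
have nab : a <> b by apply/eqP; rewrite eq_sym.
have := sep a b au bu nab.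
have := setdist_le0 _ _ _ (sub z yz) zb.
have : 0 < csep * diam (cube u) by apply: mulr_gt0 => //; move: (dyu vy); lra.
lra.
Qed.

Lemma ancestor_child_cube w i P : valid nch w -> (i < nch w)%N ->
  0 < diam (cube (i :: w)) -> cube (i :: w) !=set0 ->
  cubes nch cube P -> cube (i :: w) `<=` P ->
  P = cube (i :: w) \/ cube w `<=` P.
Proof.
move=> vw iw d_gt0 ne [w' [vw' ->]] sub.
have viw : valid nch (i :: w) by rewrite /= iw vw.
have [[|a v] e] := sub_cube_suffix _ _ vw' viw sub d_gt0 ne.
  by left; rewrite e.
by case: e => _ ew; right; rewrite ew; apply: cube_catr_sub; rewrite -ew.
Qed.

Context {s : R} {mu : {finite_measure set (Rd_borel R d) -> \bar R}}.
Hypothesis s_gt0 : 0 < s.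
Hypothesis mu_gt0 : forall Q, cubes nch cube Q -> (0 < mu Q)%E.
Implicit Types Q P : set V.

Local Notation Th := (Theta s mu).
Local Notation pc := (pcoef s mu nch cube).

Lemma Theta_ge0 Q : 0 <= Th Q.
Proof.
by apply: divr_ge0; [apply: fine_ge0; exact: measure_ge0 | exact: powR_ge0].
Qed.

Lemma pcoef_term_ge0 Q P : (0 <= ((diam Q / diam P) * Th P)%:E)%E.
Proof.
by rewrite lee_fin; apply: mulr_ge0; [apply: divr_ge0; exact: diam_ge0 |
  exact: Theta_ge0].
Qed.

Lemma pcoef_ge0 Q : (0 <= pc Q)%E.
Proof. by apply: esum_ge0 => P _; exact: pcoef_term_ge0. Qed.

Lemma pcoef_diam0 Q : diam Q = 0 -> pc Q = 0%E.
Proof. by move=> dQ; rewrite /pcoef esum1 // => P _; rewrite dQ !mul0r. Qed.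

Lemma Theta_le_pcoef Q : cubes nch cube Q -> ((Th Q)%:E <= pc Q)%E.
Proof.
move=> cQ; have [dQ0|dQ_neq0] := eqVneq (diam Q) 0.
  by rewrite /Theta dQ0 powR0 ?gt_eqF // invr0 mulr0 pcoef_ge0.
apply: esum_ge; exists [set Q].
  by split; [exact: finite_set1 | move=> P ->; split].
by rewrite fsbig_set1 divff ?mul1r.
Qed.

Lemma pcoef_child_le w i : valid nch w -> (i < nch w)%N ->
  0 < diam (cube (i :: w)) ->
  (pc (cube (i :: w)) <= (Th (cube (i :: w)))%:E + (3^-1)%:E * pc (cube w))%E.
Proof.
move=> vw iw dQ_gt0.
have [_ _ /(_ i iw) [_ /andP[_ dQ_le]] _] := cc _ vw.
have cQ : cubes nch cube (cube (i :: w)) by exists (i :: w); rewrite /= iw vw.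
have Q_neq0 : cube (i :: w) !=set0.
  by apply/set0P; apply: contraTneq (mu_gt0 _ cQ) => ->; rewrite measure0 ltxx.
set Q := cube (i :: w) in dQ_gt0 dQ_le cQ Q_neq0 *; set Q' := cube w in dQ_le *.
rewrite /pcoef; apply: le_trans (@esum_le_setU _ _ _ [set Q]
  [set P | cubes nch cube P /\ Q' `<=` P] _
  (fun P => ((diam Q / diam P) * Th P)%:E)
  (fun P => (3^-1)%:E * ((diam Q' / diam P) * Th P)%:E)%E _ _ _ _ _) _.
- move=> P [cP QP].
  by have [->|] := ancestor_child_cube _ _ _ vw iw dQ_gt0 Q_neq0 cP QP;
    [left | right].
- by move=> P _; exact: pcoef_term_ge0.
- by move=> P _; rewrite mule_ge0 ?pcoef_term_ge0 // lee_fin invr_ge0.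
- by [].
- move=> P _ _; rewrite -EFinM lee_fin -!mulrA.
  have : 0 <= (diam P)^-1 * Th P.
    by rewrite mulr_ge0 ?invr_ge0 ?diam_ge0 ?Theta_ge0.
  set k := _ * Th P; nra.
apply: leeD; first by rewrite esum_set1 ?pcoef_term_ge0 // divff ?mul1r ?gt_eqF.
by apply: esumZl_le => [|P]; [rewrite invr_ge0 | exact: pcoef_term_ge0].
Qed.

Lemma pcoef_child_le_half c w i : 3 <= c -> valid nch w -> (i < nch w)%N ->
  ~ p_doubling s c mu nch cube (cube (i :: w)) ->
  (pc (cube (i :: w)) <= (2^-1)%:E * pc (cube w))%E.
Proof.
move=> c3 vw iw /negP; rewrite -ltNge => pQ_gt.
have [dQ0|dQ_neq0] := eqVneq (diam (cube (i :: w))) 0.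
  by rewrite pcoef_diam0 // mule_ge0 ?pcoef_ge0 // lee_fin invr_ge0.
have dQ_gt0 : 0 < diam (cube (i :: w)).
  by rewrite lt_neqAle eq_sym dQ_neq0 diam_ge0.
have key := pcoef_child_le _ _ vw iw dQ_gt0.
have [q_fin|] := boolP (pc (cube w) \is a fin_num); last first.
  rewrite ge0_fin_numE ?pcoef_ge0 // -leNgt leye_eq => /eqP ->.
  by rewrite gt0_muley ?lte_fin ?invr_gt0 // leey.
have p_fin : pc (cube (i :: w)) \is a fin_num.
  rewrite ge0_fin_numE ?pcoef_ge0 //; apply: le_lt_trans key _.
  by rewrite -(fineK q_fin) -EFinM -EFinD ltry.
move: key pQ_gt; rewrite -(fineK q_fin) -(fineK p_fin) -!EFinM -EFinD.
rewrite !lee_fin lte_fin.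
have := Theta_ge0 (cube (i :: w)).
have : 3 * Th (cube (i :: w)) <= c * Th (cube (i :: w)).
  by rewrite ler_wpM2r ?Theta_ge0.
lra.
Qed.

Lemma pcoef_nondoubling_chain c n (Qs : nat -> set V) : 3 <= c ->
  (forall j, (1 <= j <= n)%N -> is_child nch cube (Qs j) (Qs j.-1)) ->
  (forall j, (1 <= j <= n)%N -> ~ p_doubling s c mu nch cube (Qs j)) ->
  forall j, (j <= n)%N -> (pc (Qs j) <= ((2^-1) ^+ j)%:E * pc (Qs 0%N))%E.
Proof.
move=> c3 child nd; elim=> [|j IH] jn; first by rewrite expr0 mul1e.
have j1n : (1 <= j.+1 <= n)%N by [].
have [w [i [vw iw /= Qj Qj1]]] := child _ j1n.
have step : (pc (Qs j.+1) <= (2^-1)%:E * pc (Qs j))%E.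
  rewrite Qj Qj1; apply: (pcoef_child_le_half _ _ _ c3 vw iw).
  by rewrite -Qj1; exact: nd.
apply: le_trans step _.
rewrite exprS EFinM -muleA lee_wpmul2l ?lee_fin ?invr_ge0 //.
exact: IH (ltnW jn).
Qed.

End CantorCubes.

Theorem lemma2p1 (R : realType) (d : nat) (s : R) :
  0 < s -> s < d%:R ->
  exists c0 : R, forall cdb : R, c0 <= cdb ->
  forall (csep : R) (nch : seq nat -> nat) (cube : seq nat -> set 'rV[R]_d)
         (mu : {finite_measure set (Rd_borel R d) -> \bar R}),
    0 < csep ->
    cantor_construction csep nch cube ->
    mu (~` cantor_set nch cube) = 0%E ->
    (forall Q, cubes nch cube Q -> (0 < mu Q)%E) ->
  forall (n : nat) (Qs : nat -> set 'rV[R]_d),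
    cubes nch cube (Qs 0%N) ->
    (forall j, (1 <= j <= n)%N -> is_child nch cube (Qs j) (Qs j.-1)) ->
    (forall j, (1 <= j <= n)%N -> ~ p_doubling s cdb mu nch cube (Qs j)) ->
  forall j, (j <= n)%N ->
    ((Theta s mu (Qs j))%:E
       <= (2 `^ (- (j%:R / 2)))%:E * pcoef s mu nch cube (Qs 0%N))%E.
Proof.
move=> s_gt0 _; exists 3 => c c3 csep nch cube mu csep_gt0 cc _ mu_gt0.
move=> n Qs cQ0 child nd j jn.
have cQj : cubes nch cube (Qs j).
  by case: j jn => [//|j] jn; apply: is_child_cubes _ _ (child j.+1 _).
apply: le_trans (Theta_le_pcoef s_gt0 _ cQj) _.
have := pcoef_nondoubling_chain cc csep_gt0 mu_gt0 _ _ _ c3 child nd _ jn.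
move=> /le_trans; apply.
by rewrite lee_wpmul2r ?pcoef_ge0 // lee_fin expr_halfV_le_powR.
Qed.
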